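(* Let $f:\mathbb{R}^d\to\mathbb{R}$, let $\widetilde{Q}:\mathbb{R}^d\times\mathbb{R}^m\to\mathbb{R}^d$, $(\mathbf{x},\mathbf{c})\mapsto \widetilde{Q}_{\mathbf{c}}(\mathbf{x})$, let $R:\mathbb{R}^d\times\mathbb{R}^m\to\mathbb{R}$, let $\lambda\in\mathbb{R}$, and set $$F_\lambda(\mathbf{x},\mathbf{c}) := f(\mathbf{x})+f(\widetilde{Q}_{\mathbf{c}}(\mathbf{x}))+\lambda R(\mathbf{x},\mathbf{c}).$$ Assume (A.1)–(A.5) below. Run the alternating proximal algorithm described below for $T$ iterations with step sizes $$\eta_1=\frac{1}{2(L+GL_{Q_1}+G_{Q_1}Ll_{Q_1})},\qquad \eta_2=\frac{1}{2(GL_{Q_2}+G_{Q_2}Ll_{Q_2})}.$$ For $t\in\{0,\dots,T-1\}$ define $$\mathbf{G}^t:=\big[\nabla_{\mathbf{x}}F_\lambda(\mathbf{x}^{t+1},\mathbf{c}^t)^T,\ \nabla_{\mathbf{c}}F_\lambda(\mathbf{x}^{t+1},\mathbf{c}^{t+1})^T\big]^T,$$ and let $L_{\min}=\min\{1/\eta_1,1/\eta_2\}$, $L_{\max}=\max\{1/\eta_1,1/\eta_2\}$. Then $$\frac{1}{T}\sum_{t=0}^{T-1}\|\mathbf{G}^t\|_2^2=\mathcal{O}\!\left(\frac{L_{\max}^2\big(F_\lambda(\mathbf{x}^0,\mathbf{c}^0)-F_\lambda(\mathbf{x}^T,\mathbf{c}^T)\big)}{L_{\min}T}\right),$$ where the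 implied constant is an absolute numerical constant.
   Context: Standing assumptions: $f$, $\widetilde{Q}$ and $R$ are differentiable, and the proximal minimizations below attain their minima. For a function $\phi$ and $\eta>0$, $\mathrm{prox}_{\eta\phi}(\mathbf{y}) := \arg\min_{\mathbf{u}}\{\frac{1}{2\eta}\|\mathbf{u}-\mathbf{y}\|_2^2+\phi(\mathbf{u})\}$. Algorithm: start from arbitrary $\mathbf{x}^0\in\mathbb{R}^d,\mathbf{c}^0\in\mathbb{R}^m$. For $t=0,\dots,T-1$: $\mathbf{g}^t=\nabla f(\mathbf{x}^t)+\nabla_{\mathbf{x}}\big[f(\widetilde{Q}_{\mathbf{c}}(\mathbf{x}))\big]_{(\mathbf{x},\mathbf{c})=(\mathbf{x}^t,\mathbf{c}^t)}$; $\mathbf{x}^{t+1}=\arg\min_{\mathbf{x}}\{\frac{1}{2\eta_1}\|\mathbf{x}-(\mathbf{x}^t-\eta_1\mathbf{g}^t)\|^2+\lambda R(\mathbf{x},\mathbf{c}^t)\}$; $\mathbf{h}^t=\nabla_{\mathbf{c}}\big[f(\widetilde{Q}_{\mathbf{c}}(\mathbf{x}^{t+1}))\big]_{\mathbf{c}=\mathbf{c}^t}$; $\mathbf{c}^{t+1}=\arg\min_{\mathbf{c}}\{\frac{1}{2\eta_2}\|\mathbf{c}-(\mathbf{c}^t-\eta_2\mathbf{h}^t)\|^2+\lambda R(\mathbf{x}^{t+1},\mathbf{c})\}$. Assumptions: (A.1) $f(\mathbf{x})>-\infty$ for all $\mathbf{x}$. (A.2) $f$ is $L$-smooth: $f(\mathbf{y})\le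 f(\mathbf{x})+\langle\nabla f(\mathbf{x}),\mathbf{y}-\mathbf{x}\rangle+\frac{L}{2}\|\mathbf{y}-\mathbf{x}\|^2$ for all $\mathbf{x},\mathbf{y}$. (A.3) $\|\nabla f(\mathbf{x})\|_2\le G$ for all $\mathbf{x}$. (A.4) For every fixed $\mathbf{c}$, $\mathbf{x}\mapsto\widetilde{Q}_{\mathbf{c}}(\mathbf{x})$ is $l_{Q_1}$-Lipschitz and its Jacobian $\nabla_{\mathbf{x}}\widetilde{Q}_{\mathbf{c}}(\mathbf{x})$ is $L_{Q_1}$-Lipschitz in $\mathbf{x}$; for every fixed $\mathbf{x}$, $\mathbf{c}\mapsto\widetilde{Q}_{\mathbf{c}}(\mathbf{x})$ is $l_{Q_2}$-Lipschitz and its Jacobian $\nabla_{\mathbf{c}}\widetilde{Q}_{\mathbf{c}}(\mathbf{x})$ is $L_{Q_2}$-Lipschitz in $\mathbf{c}$. (A.5) $\|\nabla_{\mathbf{x}}\widetilde{Q}_{\mathbf{c}}(\mathbf{x})\|_F\le G_{Q_1}$ and $\|\nabla_{\mathbf{c}}\widetilde{Q}_{\mathbf{c}}(\mathbf{x})\|_F\le G_{Q_2}$ for all $\mathbf{x},\mathbf{c}$ (Frobenius norms of the partial Jacobians). *)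

From HB Require Import structures.
From mathcomp Require Import all_boot all_order all_algebra.
From mathcomp Require Import all_classical all_reals all_analysis.
Set Implicit Arguments. Unset Strict Implicit. Unset Printing Implicit Defensive.
Import Order.TTheory GRing.Theory Num.Theory.
Import numFieldNormedType.Exports.
Local Open Scope ring_scope.

Section Defs.
Variable R : realType.

Definition sqnorm2 {n : nat} (v : 'rV[R]_n) : R := \sum_(i < n) (v 0 i) ^+ 2.
Definition norm2 {n : nat} (v : 'rV[R]_n) : R := Num.sqrt (sqnorm2 v).
Definition dotp {n : nat} (u v : 'rV[R]_n) : R := \sum_(i < n) u 0 i * v 0 i.
Definition frob {p q : nat} (A : 'M[R]_(p, q)) : R :=
  Num.sqrt (\sum_(i < p) \sum_(j < q) (A i j) ^+ 2).

Definition grad {n : nat} (phi : 'rV[R]_n -> R) (x : 'rV[R]_n) : 'rV[R]_n :=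
  \row_(i < n) ('d phi x (delta_mx 0 i : 'rV[R]_n)).

(* Jacobian of g : R^n -> R^k at x; entry (i, j) = d g_j / d x_i *)
Definition jac {n k : nat} (g : 'rV[R]_n -> 'rV[R]_k) (x : 'rV[R]_n)
  : 'M[R]_(n, k) :=
  \matrix_(i < n, j < k) ('d g x (delta_mx 0 i : 'rV[R]_n)) 0 j.

Definition is_prox {n : nat} (eta : R) (phi : 'rV[R]_n -> R) (y u : 'rV[R]_n) :=
  forall v : 'rV[R]_n,
    1 / (2 * eta) * sqnorm2 (u - y) + phi u <= 1 / (2 * eta) * sqnorm2 (v - y) + phi v.

Definition L_smooth {n : nat} (L : R) (f : 'rV[R]_n -> R) :=
  (forall x y, norm2 (grad f x - grad f y) <= L * norm2 (x - y)) /\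
  (forall x y, f y <= f x + dotp (grad f x) (y - x) + L / 2 * (norm2 (y - x)) ^+ 2).

Definition F_lam {d m : nat} (f : 'rV[R]_d -> R) (Q : 'rV[R]_d -> 'rV[R]_m -> 'rV[R]_d)
  (Rg : 'rV[R]_d -> 'rV[R]_m -> R) (lam : R) (x : 'rV[R]_d) (c : 'rV[R]_m) : R :=
  f x + f (Q x c) + lam * Rg x c.

End Defs.

(* Each block update is one proximal gradient step with step size 1/(2K) on a function
   h + P whose smooth part h has a K-Lipschitz gradient: K = L + G L_Q1 + G_Q1 L l_Q1 for
   h = f + f o Q(., c), and K = G L_Q2 + G_Q2 L l_Q2 for h = f(x) + f o Q(x, .), by the
   chain rule and (A.2)-(A.5).  The descent lemma together with the minimality of the prox
   point shows that h + P decreases by at least (K/2) |new - old|^2, while the first-order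
   condition of the prox identifies the new gradient of h + P as
   grad h(new) - grad h(old) - 2K (new - old), of norm at most 3K |new - old|.  Hence the
   squared gradient is at most 9 L_max times the decrease of F_lambda, and the bound follows
   by telescoping over t (the extra factor L_max / L_min >= 1 is slack). *)

From HB Require Import structures.
From mathcomp Require Import all_boot all_order all_algebra.
From mathcomp Require Import all_classical all_reals all_analysis.
From mathcomp Require Import ring lra.
Import Order.TTheory GRing.Theory Num.Theory.
Import numFieldNormedType.Exports.
Local Open Scope ring_scope.

Set Implicit Arguments. Unset Strict Implicit. Unset Printing Implicit Defensive.

Section Euclidean.
Variables (R : realType) (n : nat).
Implicit Types (a : R) (u v w : 'rV[R]_n).

Lemma sqnorm2_ge0 v : 0 <= sqnorm2 v.
Proof. by apply: sumr_ge0 => i _; apply: sqr_ge0. Qed.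

Lemma norm2_ge0 v : 0 <= norm2 v.
Proof. exact: sqrtr_ge0. Qed.

Lemma sqr_norm2 v : norm2 v ^+ 2 = sqnorm2 v.
Proof. by rewrite sqr_sqrtr // sqnorm2_ge0. Qed.

Lemma dotpC u v : dotp u v = dotp v u.
Proof. by apply: eq_bigr => i _; rewrite mulrC. Qed.

Lemma dotpDl u v w : dotp (u + v) w = dotp u w + dotp v w.
Proof. by rewrite /dotp -big_split; apply: eq_bigr => i _; rewrite !mxE mulrDl. Qed.

Lemma dotpZl a u v : dotp (a *: u) v = a * dotp u v.
Proof. by rewrite /dotp mulr_sumr; apply: eq_bigr => i _; rewrite !mxE mulrA. Qed.

Lemma dotpBl u v w : dotp (u - v) w = dotp u w - dotp v w.
Proof. by rewrite dotpDl -scaleN1r dotpZl mulN1r. Qed.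

Lemma dotpDr u v w : dotp u (v + w) = dotp u v + dotp u w.
Proof. by rewrite dotpC dotpDl !(dotpC u). Qed.

Lemma dotpZr a u v : dotp u (a *: v) = a * dotp u v.
Proof. by rewrite dotpC dotpZl dotpC. Qed.

Lemma dotpvv v : dotp v v = sqnorm2 v.
Proof. by apply: eq_bigr => i _; rewrite expr2. Qed.

Lemma sqnorm2D u v : sqnorm2 (u + v) = sqnorm2 u + 2 * dotp u v + sqnorm2 v.
Proof. by rewrite -!dotpvv dotpDl !dotpDr (dotpC v u); ring. Qed.

Lemma sqnorm2Z a v : sqnorm2 (a *: v) = a ^+ 2 * sqnorm2 v.
Proof. by rewrite -!dotpvv dotpZl dotpZr mulrA expr2. Qed.

Lemma sqnorm2_eq0 v : (sqnorm2 v == 0) = (v == 0).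
Proof.
apply/idP/eqP => [|->]; last by rewrite /sqnorm2 big1 // => i _; rewrite mxE expr0n.
rewrite psumr_eq0 => [/allP v0|i _]; last exact: sqr_ge0.
by apply/rowP => i; rewrite mxE; apply/eqP; rewrite -sqrf_eq0 (implyP (v0 _ (mem_index_enum _))).
Qed.

Lemma norm2Z a v : norm2 (a *: v) = `|a| * norm2 v.
Proof. by rewrite /norm2 sqnorm2Z sqrtrM ?sqr_ge0 // sqrtr_sqr. Qed.

(* Expand 0 <= ||b u - a v||^2 with a = ||u||, b = ||v||: it equals 2ab(ab - <u, v>). *)
Lemma dotp_le_norm2 u v : dotp u v <= norm2 u * norm2 v.
Proof.
have [u0|u_neq0] := eqVneq u 0.
  by rewrite u0 /dotp big1 ?mulr_ge0 ?norm2_ge0 // => i _; rewrite mxE mul0r.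
have [v0|v_neq0] := eqVneq v 0.
  by rewrite v0 /dotp big1 ?mulr_ge0 ?norm2_ge0 // => i _; rewrite mxE mulr0.
have a_gt0 : 0 < norm2 u by rewrite sqrtr_gt0 lt_def sqnorm2_eq0 u_neq0 sqnorm2_ge0.
have b_gt0 : 0 < norm2 v by rewrite sqrtr_gt0 lt_def sqnorm2_eq0 v_neq0 sqnorm2_ge0.
have := sqnorm2_ge0 (norm2 v *: u - norm2 u *: v).
rewrite sqnorm2D -scaleNr !sqnorm2Z dotpZl dotpZr -!sqr_norm2 sqrrN.
move: (norm2 u) (norm2 v) (dotp u v) a_gt0 b_gt0 => a b D a_gt0 b_gt0 H.
have ab_gt0 : 0 < a * b by apply: mulr_gt0.
have : 0 <= (a * b) * (a * b - D) by nra.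
by rewrite pmulr_rge0 // subr_ge0.
Qed.

Lemma sqr_dotp_le u v : dotp u v ^+ 2 <= sqnorm2 u * sqnorm2 v.
Proof.
have le_uv := dotp_le_norm2 u v; have := dotp_le_norm2 (- u) v.
rewrite -scaleN1r dotpZl norm2Z normrN1 mul1r mulN1r -!sqr_norm2 => le_Nuv.
have := norm2_ge0 u; have := norm2_ge0 v; nra.
Qed.

Lemma ler_norm2D u v : norm2 (u + v) <= norm2 u + norm2 v.
Proof.
rewrite -ler_sqr ?nnegrE ?addr_ge0 ?norm2_ge0 // sqr_norm2 sqnorm2D -!sqr_norm2.
by have := dotp_le_norm2 u v; have := norm2_ge0 u; have := norm2_ge0 v; nra.
Qed.

End Euclidean.

Lemma norm2_mulmx_tr_le (R : realType) (n k : nat) (A : 'M[R]_(k, n)) (v : 'rV[R]_n) :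
  norm2 (v *m A^T) <= frob A * norm2 v.
Proof.
have sumA_ge0 : 0 <= \sum_(i < k) \sum_(j < n) A i j ^+ 2.
  by do 2![apply: sumr_ge0 => ? _]; apply: sqr_ge0.
rewrite /norm2 /frob -sqrtrM // ler_sqrt ?mulr_ge0 ?sqnorm2_ge0 //.
rewrite /sqnorm2 mulr_suml; apply: ler_sum => i _.
have -> : (v *m A^T) 0 i = dotp (row i A) v.
  by rewrite !mxE; apply: eq_bigr => j _; rewrite !mxE mulrC.
have row_sq : \sum_(j < n) row i A 0 j ^+ 2 = \sum_(j < n) A i j ^+ 2.
  by apply: eq_bigr => j _; rewrite mxE.
by have := sqr_dotp_le (row i A) v; rewrite /sqnorm2 row_sq.
Qed.

Lemma mulmx_trB (R : pzRingType) n k (a b : 'rV[R]_k) (X Y : 'M[R]_(n, k)) :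
  a *m X^T - b *m Y^T = a *m (X - Y)^T + (a - b) *m Y^T.
Proof. by rewrite (raddfB (@trmx _ _ _)) mulmxBr mulmxBl addrA subrK. Qed.

Section Calculus.
Variable R : realType.

Lemma is_derive_quadratic (c0 c1 c2 s : R) :
  is_derive s 1 (fun t : R => c0 + c1 * t + c2 * t ^+ 2) (c1 + 2 * c2 * s).
Proof.
have id_s : is_derive s (1 : R) id 1 := is_derive_id s 1.
have := is_deriveD (is_deriveD (is_derive_cst c0 s 1) (is_deriveZ c1 id_s))
  (is_deriveZ c2 (is_deriveM id_s id_s)).
have -> : 0 + c1%:A + c2 *: (s%:A + s%:A) = c1 + 2 * c2 * s.
  by rewrite /GRing.scale /=; ring.
suff -> : (fun t : R => c0 + c1 * t + c2 * t ^+ 2) = cst c0 + c1 \*: id + c2 \*: (id * id) by [].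
by apply/funext => t /=; rewrite expr2.
Qed.

Lemma is_derive_along n (h : 'rV[R]_n -> R) (p w : 'rV[R]_n) (s : R) :
  differentiable h (p + s *: w) ->
  is_derive s 1 (fun t : R => h (p + t *: w)) ('d h (p + s *: w) w).
Proof.
move=> dh.
have line : is_diff s (fun t : R => p + t *: w) (fun t : R => t *: w).
  by have := is_diffD (is_diff_cst p s) (is_diff_scalel s w); rewrite add0r.
have dcomp : differentiable (h \o (fun t : R => p + t *: w)) s.
  by apply: differentiable_comp => //; exact: ex_diff.
apply: DeriveDef; first exact: diff_derivable.
by rewrite deriveE // diff_comp ?(ex_diff line) // diff_val /= scale1r.
Qed.

Lemma diff_grad n (h : 'rV[R]_n -> R) p w : 'd h p w = dotp (grad h p) w.
Proof.
rewrite {1}(row_sum_delta w) linear_sum /dotp; apply: eq_bigr => i _.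
by rewrite linearZ /grad mxE mulrC.
Qed.

Lemma dotp_delta n (v : 'rV[R]_n) i : dotp v (delta_mx 0 i) = v 0 i.
Proof.
rewrite /dotp (bigD1 i) //= big1 ?addr0 => [|j ji]; first by rewrite mxE !eqxx mulr1.
by rewrite mxE (negbTE ji) andbF mulr0.
Qed.

Lemma gradD n (a b : 'rV[R]_n -> R) x :
  differentiable a x -> differentiable b x ->
  grad (fun u => a u + b u) x = grad a x + grad b x.
Proof.
by move=> da db; apply/rowP => i; rewrite !mxE -[fun u => a u + b u]/(a + b) diffD.
Qed.

Lemma grad_comp n k (f : 'rV[R]_k -> R) (g : 'rV[R]_n -> 'rV[R]_k) x :
  differentiable g x -> differentiable f (g x) ->
  grad (fun u => f (g u)) x = grad f (g x) *m (jac g x)^T.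
Proof.
move=> dg df; apply/rowP => i; rewrite !mxE.
rewrite -[fun u => f (g u)]/(f \o g) diff_comp // /= diff_grad /dotp.
by apply: eq_bigr => j _; rewrite !mxE.
Qed.

Lemma differentiable_partial1 (U V W : normedModType R) (g : U -> V -> W) x c :
  differentiable (fun p : U * V => g p.1 p.2) (x, c) -> differentiable (g^~ c) x.
Proof.
move=> dg; rewrite -[g^~ c]/((fun p : U * V => g p.1 p.2) \o (fun u => (u, c))).
exact: differentiable_comp.
Qed.

Lemma differentiable_partial2 (U V W : normedModType R) (g : U -> V -> W) x c :
  differentiable (fun p : U * V => g p.1 p.2) (x, c) -> differentiable (g x) c.
Proof.
move=> dg; rewrite -[g x]/((fun p : U * V => g p.1 p.2) \o (fun b => (x, b))).
exact: differentiable_comp.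
Qed.

End Calculus.

Section Smooth.
Variable R : realType.
Local Open Scope classical_set_scope.

Lemma descent_lemma n (h : 'rV[R]_n -> R) (K : R) :
  (forall x, differentiable h x) ->
  (forall x y, norm2 (grad h x - grad h y) <= K * norm2 (x - y)) ->
  forall x y, h y <= h x + dotp (grad h x) (y - x) + K / 2 * sqnorm2 (y - x).
Proof.
move=> dh h_lip x y.
set v := y - x; set D := dotp (grad h x) v; set W := K / 2 * sqnorm2 v.
pose psi t := h (x + t *: v) - (0 + D * t + W * t ^+ 2).
have dpsi (s : R) : is_derive s 1 psi ('d h (x + s *: v) v - (D + 2 * W * s)).
  have := is_deriveB (is_derive_along (dh (x + s *: v))) (is_derive_quadratic 0 D W s).
  by rewrite -[psi]/((fun t => h (x + t *: v)) - (fun t => 0 + D * t + W * t ^+ 2)).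
have psi_cont : {within `[0, 1], continuous psi}.
  apply: continuous_subspaceT => s; apply: differentiable_continuous.
  by apply/derivable1_diffP; case: (dpsi s).
have [c c01 psi10] := MVT ltr01 (fun s _ => dpsi s) psi_cont.
have c_gt0 : 0 < c by rewrite (itvP c01).
have dpsi_le0 : 'd h (x + c *: v) v - (D + 2 * W * c) <= 0.
  rewrite diff_grad /D opprD addrA -dotpBl subr_le0.
  apply: le_trans (dotp_le_norm2 _ _) _.
  have := h_lip (x + c *: v) x; rewrite [x + _ - x]addrC addKr norm2Z gtr0_norm // => lip_c.
  apply: le_trans (ler_wpM2r (norm2_ge0 v) lip_c) _.
  by rewrite /W -sqr_norm2; nra.
have : psi 1 <= psi 0 by rewrite -subr_le0 psi10 subr0 mulr1.
have x_add_v : x + v = y by rewrite addrC subrK.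
rewrite /psi scale1r scale0r addr0 x_add_v.
rewrite mulr1 expr1n mulr1 mulr0 expr0n /= mulr0 !addr0 subr0.
lra.
Qed.

Lemma is_prox_diff n (eta : R) (P : 'rV[R]_n -> R) (y u w : 'rV[R]_n) :
  is_prox eta P y u -> (forall z, differentiable P z) ->
  'd P u w = - eta^-1 * dotp (u - y) w.
Proof.
move=> u_min dP.
set a := 1 / (2 * eta); set B := dotp (u - y) w.
pose psi t := a * sqnorm2 (u - y) + 2 * a * B * t + a * sqnorm2 w * t ^+ 2 + P (u + t *: w).
have psiE t : psi t = a * sqnorm2 (u + t *: w - y) + P (u + t *: w).
  by rewrite /psi [u + _ - y]addrAC (sqnorm2D (u - y)) sqnorm2Z dotpZr -/B; ring.
have dpsi (s : R) : is_derive s 1 psi (2 * a * B + 2 * (a * sqnorm2 w) * s + 'd P (u + s *: w) w).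
  have := is_deriveD (is_derive_quadratic (a * sqnorm2 (u - y)) (2 * a * B) (a * sqnorm2 w) s)
    (is_derive_along (dP (u + s *: w))).
  by rewrite -[psi]/((fun t => a * sqnorm2 (u - y) + 2 * a * B * t + a * sqnorm2 w * t ^+ 2)
                 + (fun t => P (u + t *: w))).
have dpsi0 : is_derive (0 : R) 1 psi 0.
  apply: (@derive1_at_min _ psi (-1) 1) => [|t _||t _].
  - lra.
  - by case: (dpsi t).
  - by rewrite in_itv /= ltrN10 ltr01.
  - by rewrite !psiE scale0r addr0; exact: u_min.
have two_a : 2 * a = eta^-1.
  by rewrite /a div1r invfM mulrA mulfV ?mul1r ?pnatr_eq0.
case: dpsi0 => _ D0; case: (dpsi 0) => _.
rewrite D0 mulr0 addr0 scale0r addr0 -two_a mulNr.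
lra.
Qed.

Lemma is_prox_grad n (eta : R) (P : 'rV[R]_n -> R) (y u : 'rV[R]_n) :
  is_prox eta P y u -> (forall z, differentiable P z) ->
  grad P u = - eta^-1 *: (u - y).
Proof.
move=> u_prox dP; apply/rowP => i.
by rewrite mxE (is_prox_diff (delta_mx 0 i) u_prox dP) dotp_delta [RHS]mxE.
Qed.

End Smooth.

Lemma grad_cst (R : realType) n (k : R) x : grad (fun _ : 'rV[R]_n => k) x = 0.
Proof. by apply/rowP => i; rewrite !mxE -[fun _ => k]/(cst k) diff_cst. Qed.

Lemma grad_comp_lipschitz (R : realType) n k (f : 'rV[R]_k -> R) (g : 'rV[R]_n -> 'rV[R]_k)
    (L G lg Lg Gg : R) :
  (forall x, differentiable f x) -> (forall u, differentiable g u) -> 0 <= L ->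
  (forall x y, norm2 (grad f x - grad f y) <= L * norm2 (x - y)) ->
  (forall x, norm2 (grad f x) <= G) ->
  (forall x y, norm2 (g x - g y) <= lg * norm2 (x - y)) ->
  (forall x y, frob (jac g x - jac g y) <= Lg * norm2 (x - y)) ->
  (forall x, frob (jac g x) <= Gg) ->
  forall x y, norm2 (grad (fun u => f (g u)) x - grad (fun u => f (g u)) y)
    <= (G * Lg + Gg * L * lg) * norm2 (x - y).
Proof.
move=> df dg L_ge0 f_lip f_bd g_lip jac_lip jac_bd x y.
rewrite (grad_comp (dg x) (df _)) (grad_comp (dg y) (df _)).
set a := grad f (g x); set b := grad f (g y).
rewrite mulmx_trB.
apply: le_trans (ler_norm2D _ _) _.
have le1 : norm2 (a *m (jac g x - jac g y)^T) <= Lg * norm2 (x - y) * G.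
  apply: le_trans (norm2_mulmx_tr_le _ _) _.
  by apply: ler_pM; [exact: sqrtr_ge0 | exact: norm2_ge0 | exact: jac_lip | exact: f_bd].
have le2 : norm2 ((a - b) *m (jac g y)^T) <= Gg * (L * (lg * norm2 (x - y))).
  apply: le_trans (norm2_mulmx_tr_le _ _) _.
  apply: ler_pM; [exact: sqrtr_ge0 | exact: norm2_ge0 | exact: jac_bd |].
  by apply: le_trans (f_lip _ _) _; apply: ler_wpM2l.
have -> : (G * Lg + Gg * L * lg) * norm2 (x - y)
          = Lg * norm2 (x - y) * G + Gg * (L * (lg * norm2 (x - y))) by ring.
exact: lerD le1 le2.
Qed.

Section ProxGradStep.
Variables (R : realType) (n : nat) (h P : 'rV[R]_n -> R) (K eta : R) (x0 x1 : 'rV[R]_n).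
Hypotheses (dh : forall z, differentiable h z) (dP : forall z, differentiable P z).
Hypothesis h_lip : forall x y, norm2 (grad h x - grad h y) <= K * norm2 (x - y).
Hypothesis eta_gt0 : 0 < eta.
Hypothesis x1_prox : is_prox eta P (x0 - eta *: grad h x0) x1.

Lemma prox_grad_decrease :
  h x1 + P x1 <= h x0 + P x0 - (1 / (2 * eta) - K / 2) * sqnorm2 (x1 - x0).
Proof.
have := x1_prox x0; have := descent_lemma dh h_lip x0 x1.
have -> : x1 - (x0 - eta *: grad h x0) = (x1 - x0) + eta *: grad h x0.
  by rewrite opprB addrA addrAC.
have -> : x0 - (x0 - eta *: grad h x0) = eta *: grad h x0 by rewrite opprB addrC subrK.
rewrite (sqnorm2D (x1 - x0)) !sqnorm2Z dotpZr (dotpC (x1 - x0)).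
move: (dotp _ _) (sqnorm2 (x1 - x0)) (sqnorm2 (grad h x0)) => D S Sg.
have -> : 1 / (2 * eta) * (S + 2 * (eta * D) + eta ^+ 2 * Sg)
          = 1 / (2 * eta) * S + D + 1 / (2 * eta) * (eta ^+ 2 * Sg).
  by field; rewrite gt_eqF.
rewrite mulrBl; move: (1 / (2 * eta) * S) (K / 2 * S) (1 / (2 * eta) * _) => a b c.
lra.
Qed.

Lemma prox_grad_norm_le :
  norm2 (grad (fun u => h u + P u) x1) <= (K + eta^-1) * norm2 (x1 - x0).
Proof.
rewrite (gradD (dh x1) (dP x1)) (is_prox_grad x1_prox dP).
have -> : x1 - (x0 - eta *: grad h x0) = (x1 - x0) + eta *: grad h x0.
  by rewrite opprB addrA addrAC.
rewrite scalerDr scalerA mulNr mulVf ?gt_eqF // scaleN1r.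
rewrite [- eta^-1 *: _ - _]addrC addrA.
apply: le_trans (ler_norm2D _ _) _.
rewrite norm2Z normrN gtr0_norm ?invr_gt0 // mulrDl lerD2r.
exact: h_lip.
Qed.

End ProxGradStep.

Lemma prox_grad_step_le (R : realType) n (h P : 'rV[R]_n -> R) (K M : R) (x0 x1 : 'rV[R]_n) :
  (forall z, differentiable h z) -> (forall z, differentiable P z) ->
  (forall x y, norm2 (grad h x - grad h y) <= K * norm2 (x - y)) ->
  0 < K -> 2 * K <= M ->
  is_prox (1 / (2 * K)) P (x0 - (1 / (2 * K)) *: grad h x0) x1 ->
  sqnorm2 (grad (fun u => h u + P u) x1) <= 9 * M * (h x0 + P x0 - (h x1 + P x1)).
Proof.
move=> dh dP h_lip K_gt0 le_KM x1_prox.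
have eta_gt0 : 0 < 1 / (2 * K) by rewrite divr_gt0 ?mulr_gt0.
have := prox_grad_decrease dh h_lip eta_gt0 x1_prox.
have := prox_grad_norm_le dh dP h_lip eta_gt0 x1_prox.
have -> : 1 / (2 * (1 / (2 * K))) = K by field; rewrite gt_eqF.
have -> : K + (1 / (2 * K))^-1 = 3 * K by field; rewrite gt_eqF.
have -> : K - K / 2 = K / 2 by rewrite {1}(splitr K) addrK.
rewrite -(sqr_norm2 (x1 - x0)) -sqr_norm2.
move: (norm2_ge0 (grad (fun u => h u + P u) x1)) (norm2_ge0 (x1 - x0)).
move: (norm2 _) (norm2 (x1 - x0)) => g e g_ge0 e_ge0 g_le decr.
have sq_le : g ^+ 2 <= 9 * (2 * K) * (K / 2 * e ^+ 2).
  have -> : 9 * (2 * K) * (K / 2 * e ^+ 2) = (3 * K * e) ^+ 2 by field.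
  by rewrite ler_sqr ?nnegrE // pmulr_rge0 // mulr_gt0.
apply: le_trans sq_le _; apply: ler_pM.
- by rewrite mulr_ge0 ?mulr_ge0 ?ltW.
- by rewrite mulr_ge0 ?sqr_ge0 ?divr_ge0 ?ltW.
- by rewrite ler_pM2l.
- by rewrite lerBrDr addrC -lerBrDr.
Qed.

Lemma mean_le_ratio (R : realFieldType) (k S D M N t : R) :
  0 < t -> 0 < N -> N <= M -> 0 <= S -> S <= k * M * D ->
  1 / t * S <= k * (M ^+ 2 * D / (N * t)).
Proof.
move=> t_gt0 N_gt0 le_NM S_ge0 S_le.
have -> : k * (M ^+ 2 * D / (N * t)) = 1 / t * (k * M * D * (M / N)).
  by field; rewrite !gt_eqF.
apply: ler_wpM2l; first by rewrite divr_ge0 ?ltW.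
apply: le_trans S_le (ler_peMr (le_trans S_ge0 S_le) _).
by rewrite ler_pdivlMr // mul1r.
Qed.

Section AlternatingProximal.
Variables (R : realType) (d m : nat) (f : 'rV[R]_d -> R).
Variables (Q : 'rV[R]_d -> 'rV[R]_m -> 'rV[R]_d) (Rg : 'rV[R]_d -> 'rV[R]_m -> R).
Variables (lam L G lQ1 LQ1 lQ2 LQ2 GQ1 GQ2 : R).
Hypothesis df : forall x, differentiable f x.
Hypothesis dQ : forall x c, differentiable (fun p : 'rV[R]_d * 'rV[R]_m => Q p.1 p.2) (x, c).
Hypothesis dRg : forall x c, differentiable (fun p : 'rV[R]_d * 'rV[R]_m => Rg p.1 p.2) (x, c).
Hypothesis L_ge0 : 0 <= L.
Hypothesis f_lip : forall x y, norm2 (grad f x - grad f y) <= L * norm2 (x - y).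
Hypothesis f_bd : forall x, norm2 (grad f x) <= G.
Hypothesis Q_lip1 : forall c x y, norm2 (Q x c - Q y c) <= lQ1 * norm2 (x - y).
Hypothesis jac_lip1 : forall c x y,
  frob (jac (Q^~ c) x - jac (Q^~ c) y) <= LQ1 * norm2 (x - y).
Hypothesis Q_lip2 : forall x c c', norm2 (Q x c - Q x c') <= lQ2 * norm2 (c - c').
Hypothesis jac_lip2 : forall x c c',
  frob (jac (Q x) c - jac (Q x) c') <= LQ2 * norm2 (c - c').
Hypothesis jac_bd1 : forall x c, frob (jac (Q^~ c) x) <= GQ1.
Hypothesis jac_bd2 : forall x c, frob (jac (Q x) c) <= GQ2.

Local Notation F := (F_lam f Q Rg lam).
Local Notation A := (L + G * LQ1 + GQ1 * L * lQ1).
Local Notation B := (G * LQ2 + GQ2 * L * lQ2).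

Lemma x_update_le (M : R) (c : 'rV[R]_m) (x0 x1 : 'rV[R]_d) :
  0 < A -> 2 * A <= M ->
  is_prox (1 / (2 * A)) (fun u => lam * Rg u c)
    (x0 - (1 / (2 * A)) *: (grad f x0 + grad (fun u => f (Q u c)) x0)) x1 ->
  sqnorm2 (grad (fun u => F u c) x1) <= 9 * M * (F x0 c - F x1 c).
Proof.
move=> A_gt0 le_AM x1_prox.
have dfQ u : differentiable (fun u => f (Q u c)) u.
  exact: differentiable_comp (differentiable_partial1 (dQ u c)) (df _).
have dh u : differentiable (fun u => f u + f (Q u c)) u by apply: differentiableD.
have dP u : differentiable (fun u => lam * Rg u c) u.
  by apply: differentiableZ; exact: differentiable_partial1 (dRg u c).
have h_lip x y : norm2 (grad (fun u => f u + f (Q u c)) x - grad (fun u => f u + f (Q u c)) y)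
                 <= A * norm2 (x - y).
  rewrite !gradD // opprD addrACA -[L + _ + _]addrA mulrDl.
  apply: le_trans (ler_norm2D _ _) _; apply: lerD; first exact: f_lip.
  exact: grad_comp_lipschitz (fun u => differentiable_partial1 (dQ u c)) L_ge0 f_lip f_bd
    (Q_lip1 c) (jac_lip1 c) (jac_bd1^~ c) x y.
rewrite -gradD // in x1_prox.
exact: prox_grad_step_le dh dP h_lip A_gt0 le_AM x1_prox.
Qed.

Lemma c_update_le (M : R) (x : 'rV[R]_d) (c0 c1 : 'rV[R]_m) :
  0 < B -> 2 * B <= M ->
  is_prox (1 / (2 * B)) (fun b => lam * Rg x b)
    (c0 - (1 / (2 * B)) *: grad (fun b => f (Q x b)) c0) c1 ->
  sqnorm2 (grad (F x) c1) <= 9 * M * (F x c0 - F x c1).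
Proof.
move=> B_gt0 le_BM c1_prox.
have dfQ b : differentiable (fun b => f (Q x b)) b.
  exact: differentiable_comp (differentiable_partial2 (dQ x b)) (df _).
have dh b : differentiable (fun b => f x + f (Q x b)) b by apply: differentiableD.
have dP b : differentiable (fun b => lam * Rg x b) b.
  by apply: differentiableZ; exact: differentiable_partial2 (dRg x b).
have grad_h b : grad (fun b => f x + f (Q x b)) b = grad (fun b => f (Q x b)) b.
  by rewrite (gradD (differentiable_cst _ _) (dfQ b)) grad_cst add0r.
have h_lip b b' : norm2 (grad (fun b => f x + f (Q x b)) b - grad (fun b => f x + f (Q x b)) b')
                  <= B * norm2 (b - b').
  rewrite !grad_h.
  exact: grad_comp_lipschitz (fun b => differentiable_partial2 (dQ x b)) L_ge0 f_lip f_bd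
    (Q_lip2 x) (jac_lip2 x) (jac_bd2 x) b b'.
rewrite -grad_h in c1_prox.
exact: prox_grad_step_le dh dP h_lip B_gt0 le_BM c1_prox.
Qed.

Lemma alternating_prox_sum_le (M : R) (T : nat) (xs : nat -> 'rV[R]_d) (cs : nat -> 'rV[R]_m) :
  0 < A -> 0 < B -> 2 * A <= M -> 2 * B <= M ->
  (forall t, (t < T)%N ->
     is_prox (1 / (2 * A)) (fun u => lam * Rg u (cs t))
       (xs t - (1 / (2 * A)) *: (grad f (xs t) + grad (fun u => f (Q u (cs t))) (xs t)))
       (xs t.+1) /\
     is_prox (1 / (2 * B)) (fun b => lam * Rg (xs t.+1) b)
       (cs t - (1 / (2 * B)) *: grad (fun b => f (Q (xs t.+1) b)) (cs t)) (cs t.+1)) ->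
  \sum_(t < T) (sqnorm2 (grad (fun u => F u (cs t)) (xs t.+1))
                + sqnorm2 (grad (fun b => F (xs t.+1) b) (cs t.+1)))
    <= 9 * M * (F (xs 0%N) (cs 0%N) - F (xs T) (cs T)).
Proof.
move=> A_gt0 B_gt0 le_AM le_BM iterates.
have step (t : 'I_T) :
    sqnorm2 (grad (fun u => F u (cs t)) (xs t.+1)) + sqnorm2 (grad (F (xs t.+1)) (cs t.+1))
    <= 9 * M * (F (xs t) (cs t) - F (xs t.+1) (cs t.+1)).
  have [x_prox c_prox] := iterates t (ltn_ord t).
  have -> : F (xs t) (cs t) - F (xs t.+1) (cs t.+1)
            = (F (xs t) (cs t) - F (xs t.+1) (cs t))
              + (F (xs t.+1) (cs t) - F (xs t.+1) (cs t.+1)) by rewrite subrKA.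
  rewrite mulrDr.
  exact: lerD (x_update_le A_gt0 le_AM x_prox) (c_update_le B_gt0 le_BM c_prox).
apply: le_trans (ler_sum _ (fun t _ => step t)) _.
rewrite -mulr_sumr -(big_mkord xpredT (fun t => F (xs t) (cs t) - F (xs t.+1) (cs t.+1))).
rewrite (@telescope_sumr_eq _ 0 T (fun t => - F (xs t) (cs t))) ?opprK 1?addrC //.
by move=> t _; rewrite opprK addrC.
Qed.

End AlternatingProximal.

Theorem theorem1 :
  exists C : nat, forall (R : realType) (d m : nat)
    (f : 'rV[R]_d -> R) (Q : 'rV[R]_d -> 'rV[R]_m -> 'rV[R]_d)
    (Rg : 'rV[R]_d -> 'rV[R]_m -> R) (lam : R)
    (L G lQ1 LQ1 lQ2 LQ2 GQ1 GQ2 : R),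
    (* standing differentiability assumptions *)
    (forall x : 'rV[R]_d, differentiable f x) ->
    (forall (x : 'rV[R]_d) (c : 'rV[R]_m),
        differentiable (fun p : 'rV[R]_d * 'rV[R]_m => Q p.1 p.2) (x, c)) ->
    (forall (x : 'rV[R]_d) (c : 'rV[R]_m),
        differentiable (fun p : 'rV[R]_d * 'rV[R]_m => Rg p.1 p.2) (x, c)) ->
    (* constants *)
    0 <= L -> 0 <= G -> 0 <= lQ1 -> 0 <= LQ1 -> 0 <= lQ2 -> 0 <= LQ2 ->
    0 <= GQ1 -> 0 <= GQ2 ->
    0 < L + G * LQ1 + GQ1 * L * lQ1 ->
    0 < G * LQ2 + GQ2 * L * lQ2 ->
    (* (A.2) *)
    L_smooth L f ->
    (* (A.3) *)
    (forall x, norm2 (grad f x) <= G) ->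
    (* (A.4) *)
    (forall c x y, norm2 (Q x c - Q y c) <= lQ1 * norm2 (x - y)) ->
    (forall c x y, frob (jac (fun u => Q u c) x - jac (fun u => Q u c) y)
                     <= LQ1 * norm2 (x - y)) ->
    (forall x c c', norm2 (Q x c - Q x c') <= lQ2 * norm2 (c - c')) ->
    (forall x c c', frob (jac (fun b => Q x b) c - jac (fun b => Q x b) c')
                     <= LQ2 * norm2 (c - c')) ->
    (* (A.5) *)
    (forall x c, frob (jac (fun u => Q u c) x) <= GQ1) ->
    (forall x c, frob (jac (fun b => Q x b) c) <= GQ2) ->
    forall (T : nat) (xs : nat -> 'rV[R]_d) (cs : nat -> 'rV[R]_m),
    (0 < T)%N ->
    let eta1 := 1 / (2 * (L + G * LQ1 + GQ1 * L * lQ1)) in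
    let eta2 := 1 / (2 * (G * LQ2 + GQ2 * L * lQ2)) in
    (* the alternating proximal algorithm, iterations t = 0, ..., T-1 *)
    (forall t : nat, (t < T)%N ->
       let g := grad f (xs t) + grad (fun u => f (Q u (cs t))) (xs t) in
       is_prox eta1 (fun u => lam * Rg u (cs t)) (xs t - eta1 *: g) (xs t.+1) /\
       let h := grad (fun b => f (Q (xs t.+1) b)) (cs t) in
       is_prox eta2 (fun b => lam * Rg (xs t.+1) b) (cs t - eta2 *: h) (cs t.+1)) ->
    let F := F_lam f Q Rg lam in
    let Lmin := Num.min (1 / eta1) (1 / eta2) in
    let Lmax := Num.max (1 / eta1) (1 / eta2) in
    1 / T%:R * \sum_(t < T)
        (sqnorm2 (grad (fun u => F u (cs t)) (xs t.+1))
         + sqnorm2 (grad (fun b => F (xs t.+1) b) (cs t.+1)))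
      <= C%:R * (Lmax ^+ 2 * (F (xs 0%N) (cs 0%N) - F (xs T) (cs T)) / (Lmin * T%:R)).
Proof.
exists 9%N => R d m f Q Rg lam L G lQ1 LQ1 lQ2 LQ2 GQ1 GQ2 df dQ dRg L_ge0 _ _ _ _ _ _ _
  A_gt0 B_gt0 [f_lip _] f_bd Q_lip1 jac_lip1 Q_lip2 jac_lip2 jac_bd1 jac_bd2
  T xs cs T_gt0 eta1 eta2 iterates; cbv zeta.
have -> : 1 / eta1 = 2 * (L + G * LQ1 + GQ1 * L * lQ1) by rewrite /eta1 !div1r invrK.
have -> : 1 / eta2 = 2 * (G * LQ2 + GQ2 * L * lQ2) by rewrite /eta2 !div1r invrK.
set A2 := 2 * (L + _ + _); set B2 := 2 * (G * _ + _).
have le_A2_max : A2 <= Num.max A2 B2 by rewrite le_max lexx.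
have le_B2_max : B2 <= Num.max A2 B2 by rewrite le_max lexx orbT.
apply: mean_le_ratio.
- by rewrite ltr0n.
- by rewrite lt_min !mulr_gt0.
- by rewrite ge_min le_A2_max.
- by apply: sumr_ge0 => t _; rewrite addr_ge0 ?sqnorm2_ge0.
- exact (alternating_prox_sum_le df dQ dRg L_ge0 f_lip f_bd Q_lip1 jac_lip1 Q_lip2 jac_lip2
    jac_bd1 jac_bd2 A_gt0 B_gt0 le_A2_max le_B2_max iterates).
Qed.
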